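(* Let $A\in\mathbb{C}^{n\times n}$ and let $X\in\mathbb{C}^{n\times n}$ be a matrix whose $j$-th column $x^{(j)}$ is an eigenvector of $A$ with $\|x^{(j)}\|_2=1$, for $j=1,\dots,n$. Suppose there is $k>0$ with $|X_{ij}|\le k/n^2$ for all $i\ne j$, and $n^3-3kn^2-3k^2>0$. Then $X$ is invertible and $$\kappa(X)=\|X\|_2\|X^{-1}\|_2\le\frac{n^3+3kn^2+k^2}{n^3-3kn^2-3k^2}.$$
   Context: $\kappa(X)=\|X\|_2\|X^{-1}\|_2$ is the spectral condition number. The hypothesis $|X_{ij}|\le k/n^2$ ($i\ne j$) is the situation produced by a matrix whose diagonal entries are pairwise separated by at least a constant times $n^2$ and whose off-diagonal row sums are bounded by a constant, with $x^{(j)}$ the unit eigenvector for the eigenvalue in the $j$-th Gershgorin disc. *)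

From HB Require Import structures.
From mathcomp Require Import all_boot all_order all_algebra.
From mathcomp Require Import classical_sets reals.
From mathcomp Require Import complex.
Set Implicit Arguments. Unset Strict Implicit. Unset Printing Implicit Defensive.
Import Order.TTheory GRing.Theory Num.Theory.
Local Open Scope ring_scope.
Local Open Scope classical_set_scope.

Definition cabs (R : realType) (z : R[i]) : R :=
  Num.sqrt (complex.Re z ^+ 2 + complex.Im z ^+ 2).

Definition vnorm2 (R : realType) (n : nat) (v : 'cV[R[i]]_n) : R :=
  Num.sqrt (\sum_(i < n) cabs (v i 0) ^+ 2).

Definition opnorm2 (R : realType) (n : nat) (X : 'M[R[i]]_n) : R :=
  sup [set vnorm2 (X *m v) | v in [set v : 'cV[R[i]]_n | vnorm2 v = 1]].

Definition cond2 (R : realType) (n : nat) (X : 'M[R[i]]_n) : R :=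
  opnorm2 X * opnorm2 (invmx X).

Definition is_eigenvector (R : realType) (n : nat) (A : 'M[R[i]]_n)
  (v : 'cV[R[i]]_n) : Prop :=
  v != 0 /\ exists lambda : R[i], A *m v = lambda *: v.

(* Let X have unit columns and off-diagonal entries of modulus at most
   c = k/n^2, and put a = c n = k/n and b = n c^2 = k^2/n^3.  Split X = D + E
   into its diagonal part D and off-diagonal part E.  The entries of E are at
   most c, so |E v| <= a |v| (Cauchy-Schwarz); each diagonal entry satisfies
   1 - b <= |X_jj|^2 <= 1 because its column is a unit vector.  Combining D and
   E with the weighted triangle inequality |p + q|^2 <= (1+a)|p|^2 + (1+1/a)|q|^2
   gives, for every vector v,
       |X v|^2 <= (1 + a)^2 |v|^2   and   (1 - b - a - a^2) |v|^2 <= (1 + a) |X v|^2.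
   The lower bound makes X invertible and bounds ||X^-1||_2, so that
   kappa(X) <= (1 + a) sqrt((1 + a) / (1 - b - a - a^2)); an elementary scalar
   inequality bounds this by (1 + 3a + b) / (1 - 3a - 3b), which is the claimed
   bound after multiplying numerator and denominator by n^3. *)

From HB Require Import structures.
From mathcomp Require Import all_boot all_order all_algebra.
From mathcomp Require Import classical_sets reals.
From mathcomp Require Import complex.
From mathcomp Require Import ring lra.
Import Order.TTheory GRing.Theory Num.Theory.
Local Open Scope ring_scope.
Import Normc.

Section NearDiagonal.
Set Implicit Arguments. Unset Strict Implicit.
Variable R : realType.

Lemma cabsE (z : R[i]) : cabs z = normc z.
Proof. by case: z. Qed.

Lemma normc_ge0 (z : R[i]) : 0 <= normc z.
Proof. by case: z => a b; rewrite /= sqrtr_ge0. Qed.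

Lemma normc_sum n (P : pred 'I_n) (F : 'I_n -> R[i]) :
  normc (\sum_(i | P i) F i) <= \sum_(i | P i) normc (F i).
Proof.
elim/big_rec2: _ => [|i y z _ IH]; first by rewrite normc0.
exact: le_trans (le_normcD _ _) (lerD _ IH).
Qed.

(* Cauchy-Schwarz for real finite sums, via the nonnegativity of
   sum_i (A y_i - B x_i)^2 = A (A C - B^2). *)
Lemma cauchy_schwarz n (x y : 'I_n -> R) :
  (\sum_i x i * y i) ^+ 2 <= (\sum_i x i ^+ 2) * (\sum_i y i ^+ 2).
Proof.
set A := \sum_i x i ^+ 2; set B := \sum_i x i * y i; set C := \sum_i y i ^+ 2.
have A0 : 0 <= A by apply: sumr_ge0 => i _; exact: sqr_ge0.
have expand : \sum_i (A * y i - B * x i) ^+ 2 = A * (A * C - B ^+ 2).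
  rewrite (eq_bigr (fun i => A ^+ 2 * y i ^+ 2 - (2 * A * B) * (x i * y i)
                             + B ^+ 2 * x i ^+ 2)); last by move=> i _; ring.
  by rewrite big_split sumrB /= -!mulr_sumr -/A -/B -/C; ring.
have : 0 <= A * (A * C - B ^+ 2).
  by rewrite -expand; apply: sumr_ge0 => i _; exact: sqr_ge0.
have [A_eq0 _ | A_neq0] := eqVneq A 0.
  have x0 i : x i = 0.
    apply/eqP; rewrite -sqrf_eq0; apply/eqP.
    by apply: (psumr_eq0P (P := xpredT) _ A_eq0) => // j _; exact: sqr_ge0.
  by rewrite /B big1 ?expr0n ?A_eq0 ?mul0r // => i _; rewrite x0 mul0r.
have A_gt0 : 0 < A by rewrite lt_def A_neq0 A0.
by rewrite pmulr_rge0 // subr_ge0.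
Qed.

Lemma sqr_sum_le_card n (x : 'I_n -> R) :
  (\sum_i x i) ^+ 2 <= n%:R * \sum_i x i ^+ 2.
Proof.
have := cauchy_schwarz (fun=> 1) x.
by rewrite expr1n sumr_const card_ord; under eq_bigr do rewrite mul1r.
Qed.

(* Weighted triangle inequality for squares: from s <= p + q,
   s^2 <= (1+t) p^2 + (1+1/t) q^2, since 2pq <= t p^2 + q^2/t. *)
Lemma sqr_le_weighted (s p q t : R) : 0 < t -> 0 <= s -> 0 <= p -> 0 <= q ->
  s <= p + q -> s ^+ 2 <= (1 + t) * p ^+ 2 + (1 + t^-1) * q ^+ 2.
Proof.
move=> t0 s0 p0 q0 spq.
have gap : t^-1 * (t * p - q) ^+ 2 = t * p ^+ 2 - 2 * p * q + t^-1 * q ^+ 2.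
  by field; rewrite gt_eqF.
have : 0 <= t^-1 * (t * p - q) ^+ 2 by rewrite mulr_ge0 ?sqr_ge0 ?invr_ge0 ?ltW.
nra.
Qed.

Definition sqnorm n (v : 'cV[R[i]]_n) : R := \sum_i normc (v i 0) ^+ 2.

Lemma sqnorm_ge0 n (v : 'cV[R[i]]_n) : 0 <= sqnorm v.
Proof. by apply: sumr_ge0 => i _; exact: sqr_ge0. Qed.

Lemma vnorm2E n (v : 'cV[R[i]]_n) : vnorm2 v = Num.sqrt (sqnorm v).
Proof. by congr Num.sqrt; apply: eq_bigr => i _; rewrite cabsE. Qed.

Lemma sqnorm_unit n (v : 'cV[R[i]]_n) : vnorm2 v = 1 -> sqnorm v = 1.
Proof. by rewrite vnorm2E => h; rewrite -(sqr_sqrtr (sqnorm_ge0 v)) h expr1n. Qed.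

Lemma sqnorm_eq0 n (v : 'cV[R[i]]_n) : sqnorm v = 0 -> v = 0.
Proof.
move=> v0; apply/matrixP => i j; rewrite ord1 mxE; apply: eq0_normc.
apply/eqP; rewrite -sqrf_eq0; apply/eqP.
by apply: (psumr_eq0P (P := xpredT) _ v0) => // l _; exact: sqr_ge0.
Qed.

Lemma sqnormD_weighted n (u v : 'cV[R[i]]_n) (t : R) : 0 < t ->
  sqnorm (u + v) <= (1 + t) * sqnorm u + (1 + t^-1) * sqnorm v.
Proof.
move=> t0; rewrite /sqnorm !mulr_sumr -big_split ler_sum // => i _.
by rewrite mxE; apply: sqr_le_weighted; rewrite ?normc_ge0 ?le_normcD.
Qed.

Lemma sqnorm_mul_bounded n (E : 'M[R[i]]_n) (c : R) (v : 'cV[R[i]]_n) :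
  (forall i j, normc (E i j) <= c) ->
  sqnorm (E *m v) <= (c * n%:R) ^+ 2 * sqnorm v.
Proof.
move=> Ec.
have row_bound i : normc ((E *m v) i 0) ^+ 2 <= c ^+ 2 * (n%:R * sqnorm v).
  have c0 : 0 <= c by apply: le_trans (normc_ge0 _) (Ec i i).
  have h : normc ((E *m v) i 0) <= c * \sum_j normc (v j 0).
    rewrite mxE mulr_sumr; apply: le_trans (normc_sum _ _) (ler_sum _ _) => j _.
    by rewrite normcM ler_wpM2r ?normc_ge0.
  apply: le_trans (_ : (c * \sum_j normc (v j 0)) ^+ 2 <= _).
    by rewrite lerXn2r ?nnegrE ?normc_ge0 ?mulr_ge0 ?sumr_ge0 // => j _; exact: normc_ge0.
  by rewrite exprMn ler_wpM2l ?sqr_ge0 ?sqr_sum_le_card.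
apply: le_trans (ler_sum _ (fun i _ => row_bound i)) _.
suff -> : \sum_(i < n) c ^+ 2 * (n%:R * sqnorm v) = (c * n%:R) ^+ 2 * sqnorm v by [].
by rewrite sumr_const card_ord -mulr_natl; ring.
Qed.

Definition diag_part n (X : 'M[R[i]]_n) : 'M[R[i]]_n := diag_mx (\row_i X i i).

Lemma sqnorm_diag_part n (X : 'M[R[i]]_n) (lo hi : R) (v : 'cV[R[i]]_n) :
  (forall i, lo <= normc (X i i) ^+ 2 <= hi) ->
  lo * sqnorm v <= sqnorm (diag_part X *m v) <= hi * sqnorm v.
Proof.
move=> Xlohi; rewrite /sqnorm !mulr_sumr.
have entry i : normc ((diag_part X *m v) i 0) ^+ 2
               = normc (X i i) ^+ 2 * normc (v i 0) ^+ 2.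
  by rewrite mul_diag_mx !mxE normcM exprMn.
apply/andP; split; apply: ler_sum => i _; rewrite entry;
  have /andP [lo_i hi_i] := Xlohi i; rewrite ler_wpM2r ?sqr_ge0 //.
Qed.

Lemma diag_entry_bounds n (X : 'M[R[i]]_n) (c : R) :
  (forall j, sqnorm (col j X) = 1) ->
  (forall i j, i != j -> normc (X i j) <= c) ->
  forall j, 1 - n%:R * c ^+ 2 <= normc (X j j) ^+ 2 <= 1.
Proof.
move=> unit_col off j.
have := unit_col j; rewrite /sqnorm (bigD1 j) //= !mxE.
under eq_bigr do rewrite mxE.
set rest := \sum_(i | i != j) _ => col_sum.
have rest0 : 0 <= rest by apply: sumr_ge0 => i _; exact: sqr_ge0.
have rest_le : rest <= n%:R * c ^+ 2.
  apply: (@le_trans _ _ (\sum_(i | i != j) c ^+ 2)).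
    apply: ler_sum => i ij; rewrite lerXn2r ?nnegrE ?normc_ge0 ?off //.
    exact: le_trans (normc_ge0 _) (off i j ij).
  rewrite mulr_natl -[in leRHS](card_ord n) -sumr_const [in leRHS](bigD1 j) //=.
  by rewrite lerDr sqr_ge0.
by apply/andP; split; lra.
Qed.


(* Two-sided distortion bound for a matrix with unit columns whose off-diagonal
   entries are at most c, with a := c n:  X = D + E with D diagonal and E
   having entries at most c, so that |E v| <= a |v| and (1 - n c^2) |v|^2 <= |D v|^2.
   Both estimates combine D and E through the weighted triangle inequality
   with weight a. *)
Lemma near_diag_sqnorm_bounds n (X : 'M[R[i]]_n) (c : R) :
  0 < c * n%:R ->
  (forall j, sqnorm (col j X) = 1) ->
  (forall i j, i != j -> normc (X i j) <= c) ->
  forall v : 'cV[R[i]]_n,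
    sqnorm (X *m v) <= (1 + c * n%:R) ^+ 2 * sqnorm v /\
    (1 - n%:R * c ^+ 2 - c * n%:R - (c * n%:R) ^+ 2) * sqnorm v
      <= (1 + c * n%:R) * sqnorm (X *m v).
Proof.
move=> a0 unit_col off v; set a := c * n%:R in a0 *.
have c0 : 0 <= c by move: a0; rewrite /a; have := ler0n R n; nra.
pose E := X - diag_part X.
have DE : diag_part X + E = X by rewrite addrC subrK.
have XE : X + - E = diag_part X by rewrite opprB addrC subrK.
have E_le_c i j : normc (E i j) <= c.
  rewrite !mxE; have [<-|ij] := eqVneq i j; first by rewrite subrr normc0.
  by rewrite mulr0n subr0; exact: off.
have Ev : sqnorm (E *m v) <= a ^+ 2 * sqnorm v := sqnorm_mul_bounded v E_le_c.
have mEv : sqnorm ((- E) *m v) <= a ^+ 2 * sqnorm v.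
  by apply: sqnorm_mul_bounded => i j; rewrite mxE normcN.
have /andP [Dv_lo Dv_hi] := sqnorm_diag_part v (diag_entry_bounds unit_col off).
have weight : (1 + a^-1) * a ^+ 2 = a + a ^+ 2 by field; rewrite gt_eqF.
have a1 : 0 <= 1 + a by rewrite addr_ge0 // ltW.
have ai1 : 0 <= 1 + a^-1 by rewrite addr_ge0 // invr_ge0 ltW.
split.
- have XD := sqnormD_weighted (diag_part X *m v) (E *m v) a0.
  rewrite -mulmxDl DE in XD; apply: le_trans XD _.
  have -> : (1 + a) ^+ 2 * sqnorm v
            = (1 + a) * (1 * sqnorm v) + (1 + a^-1) * (a ^+ 2 * sqnorm v).
    by rewrite mul1r; field; rewrite gt_eqF.
  exact: (lerD (ler_wpM2l a1 Dv_hi) (ler_wpM2l ai1 Ev)).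
- have DX := sqnormD_weighted (X *m v) ((- E) *m v) a0.
  rewrite -mulmxDl XE in DX.
  have mEv' : (1 + a^-1) * sqnorm ((- E) *m v) <= (a + a ^+ 2) * sqnorm v.
    by rewrite -weight -mulrA ler_wpM2l.
  have := le_trans Dv_lo (le_trans DX (lerD (lexx _) mEv')).
  by rewrite -lerBlDr -mulrBl !opprD !addrA.
Qed.

Lemma sqnorm0 n : sqnorm (0 : 'cV[R[i]]_n) = 0.
Proof. by rewrite /sqnorm big1 // => i _; rewrite mxE normc0 expr0n. Qed.

(* If |Y v|^2 <= B^2 |v|^2 for every v, then the spectral norm of Y is at most B;
   the dimension is positive so that the unit sphere is not empty. *)
Lemma opnorm2_le n (Y : 'M[R[i]]_n.+1) (B : R) : 0 <= B ->
  (forall v, sqnorm (Y *m v) <= B ^+ 2 * sqnorm v) -> 0 <= opnorm2 Y <= B.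
Proof.
move=> B0 YB.
set E := [set vnorm2 (Y *m v) | v in [set v | vnorm2 v = 1]]%classic.
have ubE : ubound E B.
  move=> _ [v /= /sqnorm_unit v1 <-]; rewrite vnorm2E -(ger0_norm B0) -sqrtr_sqr.
  by rewrite ler_sqrt ?sqr_ge0 // -[leRHS]mulr1 -v1 YB.
pose e : 'cV[R[i]]_n.+1 := \col_i (i == ord0)%:R.
have e1 : vnorm2 e = 1.
  rewrite vnorm2E /sqnorm (bigD1 ord0) //= big1 => [|i i0].
    by rewrite mxE eqxx normc1 expr1n addr0 sqrtr1.
  by rewrite mxE (negbTE i0) normc0 expr0n.
have Ee : E (vnorm2 (Y *m e)) by exists e.
apply/andP; split; last by apply: ge_sup => //; exists (vnorm2 (Y *m e)).
apply: le_trans (ub_le_sup _ Ee); first by rewrite vnorm2E sqrtr_ge0.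
by exists B.
Qed.

Lemma unitmx_of_lower_bound n (X : 'M[R[i]]_n) (alpha beta : R) : 0 < alpha ->
  (forall v, alpha * sqnorm v <= beta * sqnorm (X *m v)) -> X \in unitmx.
Proof.
move=> alpha0 low; rewrite unitmxE unitfE -det_tr; apply/det0P => -[w w0 wX].
have Xw : X *m w^T = 0 by rewrite -[X *m w^T]trmxK trmx_mul trmxK wX trmx0.
have /sqnorm_eq0 : sqnorm w^T = 0.
  apply/eqP; rewrite eq_le sqnorm_ge0 andbT -(pmulr_rle0 _ alpha0).
  by have := low w^T; rewrite Xw sqnorm0 mulr0.
by move/(congr1 trmx); rewrite trmxK trmx0; apply/eqP.
Qed.

Lemma opnorm2_inv_le n (X : 'M[R[i]]_n.+1) (alpha beta : R) :
  0 < alpha -> 0 <= beta ->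
  (forall v, alpha * sqnorm v <= beta * sqnorm (X *m v)) ->
  0 <= opnorm2 (invmx X) <= Num.sqrt (beta / alpha).
Proof.
move=> alpha0 beta0 low; apply: opnorm2_le => [|v]; first exact: sqrtr_ge0.
rewrite sqr_sqrtr ?divr_ge0 ?(ltW alpha0) // mulrAC ler_pdivlMr //.
by have := low (invmx X *m v); rewrite mulKVmx ?(unitmx_of_lower_bound alpha0 low) // mulrC.
Qed.

Lemma cond2_le n (X : 'M[R[i]]_n.+1) (U alpha beta : R) :
  0 <= U -> 0 < alpha -> 0 <= beta ->
  (forall v, sqnorm (X *m v) <= U ^+ 2 * sqnorm v) ->
  (forall v, alpha * sqnorm v <= beta * sqnorm (X *m v)) ->
  cond2 X <= U * Num.sqrt (beta / alpha).
Proof.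
move=> U0 alpha0 beta0 up low.
have /andP [X0 XU] := opnorm2_le U0 up.
have /andP [Xi0 XiB] := opnorm2_inv_le alpha0 beta0 low.
exact: (ler_pM X0 Xi0 XU XiB).
Qed.

(* The scalar inequality turning the distortion bounds into the stated bound,
   in terms of a = k/n and b = k^2/n^3: compare squares, using
   (1+a)^3 <= (1+3a+b)^2 and (1-3a-3b)^2 <= 1-b-a-a^2. *)
Lemma cond_estimate (a b : R) : 0 < a -> 0 <= b -> 0 < 1 - 3 * a - 3 * b ->
  0 < 1 - b - a - a ^+ 2 /\
  (1 + a) * Num.sqrt ((1 + a) / (1 - b - a - a ^+ 2))
    <= (1 + 3 * a + b) / (1 - 3 * a - 3 * b).
Proof.
move=> a0 b0 D0.
have a2 : a ^+ 2 <= a / 3 by nra.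
have L0 : 0 < 1 - b - a - a ^+ 2 by nra.
split=> //.
have num : (1 + a) ^+ 3 <= (1 + 3 * a + b) ^+ 2.
  have : a ^+ 3 <= a ^+ 2 by rewrite exprS; nra.
  nra.
have den : (1 - 3 * a - 3 * b) ^+ 2 <= 1 - b - a - a ^+ 2 by nra.
have a1 : 0 <= 1 + a by lra.
have q0 : 0 <= (1 + a) / (1 - b - a - a ^+ 2) by apply: divr_ge0; lra.
have N0 : 0 <= (1 + 3 * a + b) / (1 - 3 * a - 3 * b) by apply: divr_ge0; lra.
rewrite -(@ler_pXn2r _ 2) ?nnegrE ?N0 ?mulr_ge0 ?sqrtr_ge0 //.
rewrite exprMn sqr_sqrtr // expr_div_n mulrA ler_pdivrMr //.
rewrite [leRHS]mulrAC ler_pdivlMr ?exprn_gt0 //.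
rewrite (_ : (1 + a) ^+ 2 * (1 + a) = (1 + a) ^+ 3); last by ring.
by apply: ler_pM; rewrite ?sqr_ge0 ?exprn_ge0.
Qed.

End NearDiagonal.

(* Theorem 3: with c = k/n^2, the distortion bounds hold with a = k/n and
   b = k^2/n^3, and the stated fraction equals (1+3a+b)/(1-3a-3b). *)
Theorem theorem3 (R : realType) (n : nat) (A X : 'M[R[i]]_n) (k : R) :
  (forall j : 'I_n, is_eigenvector A (col j X) /\ vnorm2 (col j X) = 1) ->
  0 < k ->
  (forall i j : 'I_n, i != j -> cabs (X i j) <= k / (n%:R ^+ 2)) ->
  0 < n%:R ^+ 3 - 3 * k * n%:R ^+ 2 - 3 * k ^+ 2 ->
  X \in unitmx /\
  cond2 X <= (n%:R ^+ 3 + 3 * k * n%:R ^+ 2 + k ^+ 2)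
             / (n%:R ^+ 3 - 3 * k * n%:R ^+ 2 - 3 * k ^+ 2).
Proof.
case: n A X => [|n] A X eig k0 off pos; first by move: pos; rewrite expr0n /=; nra.
set m : R := n.+1%:R in off pos *; set c := k / m ^+ 2.
have m_gt0 : 0 < m by rewrite ltr0Sn.
have m0 : m != 0 by rewrite gt_eqF.
have unit_col j : sqnorm (col j X) = 1 := sqnorm_unit (eig j).2.
have off_c i j : i != j -> normc (X i j) <= c by rewrite -cabsE; exact: off.
have a0 : 0 < c * m by rewrite mulr_gt0 ?divr_gt0 ?exprn_gt0.
have bounds := near_diag_sqnorm_bounds a0 unit_col off_c.
set a := c * m in a0 bounds; set b := m * c ^+ 2 in bounds.
have eD : m ^+ 3 - 3 * k * m ^+ 2 - 3 * k ^+ 2 = m ^+ 3 * (1 - 3 * a - 3 * b).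
  by rewrite /a /b /c; field; rewrite nat1r pnatr_eq0.
have eN : m ^+ 3 + 3 * k * m ^+ 2 + k ^+ 2 = m ^+ 3 * (1 + 3 * a + b).
  by rewrite /a /b /c; field; rewrite nat1r pnatr_eq0.
have D0 : 0 < 1 - 3 * a - 3 * b by move: pos; rewrite eD pmulr_rgt0 ?exprn_gt0.
have [L0 estimate] := cond_estimate a0 (mulr_ge0 (ler0n _ _) (sqr_ge0 c)) D0.
have up v := (bounds v).1; have low v := (bounds v).2.
split; first exact: unitmx_of_lower_bound L0 low.
rewrite eN eD -mulf_div divff ?mul1r ?expf_neq0 //.
apply: le_trans estimate; apply: cond2_le up low; rewrite ?addr_ge0 ?ltW //.
Qed.
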